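(* Let $h$ be an oriented cohomology theory with associated formal group law $F$, let $X$ be a smooth projective variety and let $L_1,\dots,L_r$ be line bundles on $X$. Then, in $h(X)$, $$c_r\Big(\prod_{l=1}^r(1-[L_l^\vee])\Big)\equiv(-1)^{r-1}(r-1)!\cdot\prod_{l=1}^rc_1(L_l)\mod\gamma^{r+1}h(X),$$ where the product on the left is taken in $K_0(X)$.
   Context: An oriented cohomology theory (in the sense of Levine–Morel / Panin–Smirnov) $h$ is a contravariant functor from smooth projective varieties over a field $k$ to commutative rings, with push-forwards for proper maps, equipped with characteristic classes $c_i:K_0(X)\to h(X)$, $i\ge1$. The total characteristic class is $c(x)=1+c_1(x)t+c_2(x)t^2+\dots\in h(X)[[t]]$; it satisfies $c(E)=1$ for a trivial bundle $E$, $c_i(E)=0$ for $i>\mathrm{rk}(E)$, and $c(E\oplus E')=c(E)c(E')$ (so $c$ is multiplicative on $K_0$). There is a formal group law $F$ over $R=h(\mathrm{Spec}\,k)$ with $c_1(L_1\otimes L_2)=c_1(L_1)+_Fc_1(L_2)$ for line bundles $L_1,L_2$. For $d\ge0$, $\gamma^dh(X)$ is the $R$-submodule of $h(X)$ generated by all products $c_1(L_1)\cdots c_1(L_l)$ with $l\ge d$ and $L_1,\dots,L_l$ line bundles on $X$. *)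

(* Abstract axiomatic model of an oriented cohomology theory
   h evaluated at one fixed smooth projective variety X. *)
From HB Require Import structures.
From mathcomp Require Import all_boot all_order all_algebra.
Set Implicit Arguments. Unset Strict Implicit. Unset Printing Implicit Defensive.
Import Order.TTheory GRing.Theory Num.Theory.
Local Open Scope ring_scope.

(* A two-variable formal power series over R is given by its coefficients
   a i j (coefficient of x^i y^j).  For nilpotent arguments (x^N = y^N = 0)
   the series evaluates to a finite sum. *)
Definition fgl_eval (R : comNzRingType) (A : comAlgType R)
    (a : nat -> nat -> R) (N : nat) (x y : A) : A :=
  \sum_(i < N) \sum_(j < N) a i j *: (x ^+ i * y ^+ j).

(* Associativity of formal power series is
   expressed as equality after evaluation at arbitrary nilpotent elements of
   arbitrary commutative R-algebras (equivalent to the formal identity, by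
   taking R[x,y,z]/(x,y,z)^M for all M).  Bound 3N suffices since F(x,y)
   lies in the ideal (x,y), whose (2N-1)-st power vanishes. *)
Definition is_fgl (R : comNzRingType) (a : nat -> nat -> R) : Prop :=
  [/\ (forall i, a i 0%N = (i == 1%N)%:R),
      (forall j, a 0%N j = (j == 1%N)%:R),
      (forall i j, a i j = a j i) &
      (forall (A : comAlgType R) (N : nat) (x y z : A),
          x ^+ N = 0 -> y ^+ N = 0 -> z ^+ N = 0 ->
          fgl_eval a (3 * N) (fgl_eval a N x y) z
          = fgl_eval a (3 * N) x (fgl_eval a N y z))].

(* Data of an oriented cohomology theory at X:
   - R = h(Spec k), H = h(X) a commutative R-algebra;
   - K0 = K_0(X);
   - LB = line bundles on X up to isomorphism, with tensor product, dual and
     trivial bundle, and the class map cls : LB -> K_0(X);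
   - c i : K_0(X) -> h(X) the characteristic classes (c 0 = 1);
   - a : the formal group law; N : a nilpotency bound for first Chern
     classes (e.g. dim X + 1). *)
Record oct_axioms (R : comNzRingType) (H : comAlgType R) (K0 : comNzRingType)
    (LB : Type) (tens : LB -> LB -> LB) (dual : LB -> LB) (triv : LB)
    (cls : LB -> K0) (c : nat -> K0 -> H) (a : nat -> nat -> R) (N : nat)
    : Prop := {
  tensC : forall L M, tens L M = tens M L;
  tensA : forall L M P, tens L (tens M P) = tens (tens L M) P;
  tens1 : forall L, tens L triv = L;
  tensV : forall L, tens L (dual L) = triv;
  cls_tens : forall L M, cls (tens L M) = cls L * cls M;
  cls_triv : cls triv = 1;
  c0 : forall x, c 0%N x = 1;
  (* c(E (+) E') = c(E) c(E') : multiplicativity on K_0 *)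
  c_add : forall n x y,
      c n (x + y) = \sum_(i < n.+1) c i x * c (n - i)%N y;
  (* c(E) = 1 for trivial bundles E (class m%:R in K_0) *)
  c_trivial : forall m i, (0 < i)%N -> c i (m%:R) = 0;
  c_line_rank : forall L i, (1 < i)%N -> c i (cls L) = 0;
  fgl_ok : is_fgl a;
  c1_nilp : forall L, (c 1%N (cls L)) ^+ N = 0;
  c1_tens : forall L M,
      c 1%N (cls (tens L M)) = fgl_eval a N (c 1%N (cls L)) (c 1%N (cls M))
}.

Definition in_gamma (R : comNzRingType) (H : comAlgType R) (K0 : comNzRingType)
    (LB : Type) (cls : LB -> K0) (c : nat -> K0 -> H) (d : nat) (x : H) : Prop :=
  exists s : seq (R * seq LB),
    all (fun p : R * seq LB => (d <= size p.2)%N) s /\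
    x = \sum_(p <- s) p.1 *: \prod_(L <- p.2) c 1%N (cls L).

From HB Require Import structures.
From mathcomp Require Import all_boot all_order all_algebra.
From mathcomp Require Import ring zify.
Set Implicit Arguments. Unset Strict Implicit. Unset Printing Implicit Defensive.
Import Order.TTheory GRing.Theory Num.Theory.
Local Open Scope ring_scope.

(* Expanding in K_0(X), prod_l (1 - [M_l]) = [E] - [O], where E (resp. O) is the
   sum of the tensor products of the M_l over the subsets of even (resp. odd)
   cardinality.  By the Whitney formula c(E) = c(E - O) c(O), and c(E), c(O)
   are the products prod (1 + c_1(.) t) over these line bundles.  Modulo
   gamma^2 the first Chern class is additive (the formal group law is x + y up
   to degree 2), so the c_1 of the subset products are close to the subset
   sums of the w_l = c_1(M_l).  A purely combinatorial identity then says that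
   the elementary symmetric functions of the even and odd subset sums agree in
   degrees < r and differ by -(r-1)! prod w_l in degree r.  Inverting the
   relation c(E) = c(E - O) c(O) degree by degree yields the claim for
   M_l = L_l^v, since c_1(L^v) = -c_1(L) mod gamma^2. *)

Lemma sum_ord_from (V : nmodType) (F : nat -> V) r m :
  (forall j, (j < r)%N -> F j = 0) -> \sum_(j < m) F j = \sum_(r <= j < m) F j.
Proof.
move=> F0; rewrite -(big_mkord xpredT); case: (leqP r m) => hrm.
  by rewrite (big_cat_nat (n := r) (leq0n r) hrm) /= [X in X + _]big_nat big1 ?add0r.
rewrite [RHS]big_geq ?(ltnW hrm) // big_nat big1 // => j /andP[_ hj].
exact/F0/(ltn_trans hj hrm).
Qed.

Lemma sum_ord_upto (V : nmodType) (F : nat -> V) s m :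
  (s <= m)%N -> (forall j, (s <= j)%N -> F j = 0) ->
  \sum_(j < m) F j = \sum_(j < s) F j.
Proof.
move=> hsm F0; rewrite -!(big_mkord xpredT) (big_cat_nat (n := s) (leq0n s) hsm) /=.
rewrite [X in _ + X]big_nat_cond [X in _ + X]big1 ?addr0 // => j.
by case/andP=> /andP[/F0].
Qed.

Section ElementarySymmetric.
Variable A : comNzRingType.
Implicit Types (l e o : seq A) (u w : A).

Definition elem_sym l k : A := (\prod_(u <- l) (1 + u%:P * 'X))`_k.

Lemma elem_sym_nil k : elem_sym [::] k = (k == 0%N)%:R.
Proof. by rewrite /elem_sym big_nil coef1. Qed.

Lemma elem_sym0 l : elem_sym l 0 = 1.
Proof.
rewrite /elem_sym coef0_prod big1 // => u _.
by rewrite coefD coef1 coefCM coefX mulr0 addr0.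
Qed.

Lemma elem_sym_consS u l k :
  elem_sym (u :: l) k.+1 = elem_sym l k.+1 + u * elem_sym l k.
Proof.
by rewrite /elem_sym big_cons mulrDl mul1r coefD -mulrA coefCM coefXM.
Qed.

Lemma elem_sym_size l k : (size l < k)%N -> elem_sym l k = 0.
Proof.
elim: l k => [|u l IH] [|k] //=; rewrite ?elem_sym_nil // => h.
by rewrite elem_sym_consS !IH ?mulr0 ?addr0 // ltnW.
Qed.

Lemma elem_sym_cat l1 l2 k :
  elem_sym (l1 ++ l2) k = \sum_(j < k.+1) elem_sym l1 j * elem_sym l2 (k - j).
Proof. by rewrite /elem_sym big_cat coefM. Qed.

Definition shift w l := map (fun v => w + v) l.

(* Binomial expansion of prod_(u <- l) ((1 + w t) + u t). *)
Lemma elem_sym_shift w l k :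
  elem_sym (shift w l) k =
  \sum_(j < k.+1) elem_sym l j * 'C(size l - j, k - j)%:R * w ^+ (k - j).
Proof.
elim: l k => [|u l IH] k.
  rewrite /= elem_sym_nil big_ord_recl /= elem_sym_nil subn0 big1 ?addr0.
    by case: k => [|k]; rewrite ?expr0 ?mulr1 ?bin0 // bin0n mulr0 mul0r.
  by move=> j _; rewrite elem_sym_nil mul0r mul0r.
case: k => [|k]; first by rewrite big_ord1 !elem_sym0 bin0 !mulr1.
rewrite /= elem_sym_consS -/(shift w l) !IH /=.
rewrite [RHS]big_ord_recl /= elem_sym0 !subn0.
under [in RHS]eq_bigr => j _ do
  rewrite /bump /= add1n elem_sym_consS !subSS mulrDl mulrDl.
rewrite big_split /= mulrDl addrA [RHS]addrA; congr (_ + _); last first.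
  by rewrite mulr_sumr; apply: eq_bigr => j _; rewrite !mulrA.
rewrite (big_ord_recl k.+1) /= elem_sym0 !subn0.
rewrite [X in w * X]big_ord_recl /= elem_sym0 !subn0 mulrDr.
under eq_bigr => j _ do rewrite /bump /= add1n !subSS.
under [X in _ + w * X]eq_bigr => j _ do rewrite /bump /= add1n.
rewrite addrACA; congr (_ + _).
  by rewrite !mul1r mulrCA -exprS -mulrDl -natrD -binS.
rewrite big_ord_recr /= [RHS]big_ord_recr /= addrAC; congr (_ + _); last first.
  by rewrite !subnn !bin0.
rewrite mulr_sumr -big_split /=; apply: eq_bigr => j _.
have hj : (j < k)%N := ltn_ord j.
case: (ltnP j (size l)) => hjn; last first.
  by rewrite elem_sym_size ?ltnS // !mul0r mulr0 addr0.
have -> : (k - j = (k - j.+1).+1)%N by rewrite subnS prednK // subn_gt0.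
have -> : (size l - j = (size l - j.+1).+1)%N by rewrite subnS prednK // subn_gt0.
rewrite binS natrD exprS; ring.
Qed.

Lemma elem_sym_shift1 w l : elem_sym (shift w l) 1 = (size l)%:R * w + elem_sym l 1.
Proof.
rewrite elem_sym_shift !big_ord_recl big_ord0 /= elem_sym0 subn0 subnn.
by rewrite bin1 bin0 !mulr1 mul1r addr0.
Qed.

Lemma elem_sym_shiftB w e o m : size e = size o ->
  elem_sym (shift w e) m - elem_sym (shift w o) m =
  \sum_(i < m.+1) (elem_sym e i - elem_sym o i)
                  * 'C(size e - i, m - i)%:R * w ^+ (m - i).
Proof.
move=> eq_size; rewrite !elem_sym_shift eq_size -sumrB.
by apply: eq_bigr => i _; rewrite !mulrBl.
Qed.

End ElementarySymmetric.

(* One step of the recursion defining subset sums: e and o have the same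
   elementary symmetric functions below degree r; then so do
   e ++ shift w o and o ++ shift w e up to degree r, and their discrepancy in
   degree r + 1 is r w times the old discrepancy in degree r. *)
Section ParityStep.
Variables (A : comNzRingType) (e o : seq A) (r : nat) (w : A).
Hypotheses (eq_size : size e = size o) (r_gt0 : (0 < r)%N) (r_le : (r <= size e)%N).
Hypothesis eq_low : forall j, (j < r)%N -> elem_sym e j = elem_sym o j.

Let D j := elem_sym e j - elem_sym o j.
Let Dsh m := elem_sym (shift w e) m - elem_sym (shift w o) m.

Let D_low j : (j < r)%N -> D j = 0.
Proof. by move=> hj; rewrite /D eq_low ?subrr. Qed.

(* Only the terms of index >= r survive in elem_sym_shiftB. *)
Let Dsh_from m : Dsh m =
  \sum_(r <= i < m.+1) D i * 'C(size e - i, m - i)%:R * w ^+ (m - i).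
Proof.
rewrite /Dsh elem_sym_shiftB //.
rewrite (sum_ord_from (r := r)
  (F := fun i => D i * 'C(size e - i, m - i)%:R * w ^+ (m - i))) //.
by move=> j hj; rewrite D_low ?mul0r.
Qed.

Let Dsh_low m : (m < r)%N -> Dsh m = 0.
Proof. by move=> hm; rewrite Dsh_from big_geq. Qed.

Let Dsh_top : Dsh r = D r.
Proof. by rewrite Dsh_from big_nat1 subnn bin0 !mulr1. Qed.

Let Dsh_next : Dsh r.+1 = D r.+1 + D r * (size e - r)%:R * w.
Proof.
by rewrite Dsh_from big_nat_recr // big_nat1 subnn subSnn bin0 bin1 !mulr1 addrC.
Qed.

Let cat_discrepancy k :
  elem_sym (e ++ shift w o) k - elem_sym (o ++ shift w e) k =
  \sum_(j < k.+1) D j * elem_sym (shift w o) (k - j)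
  - \sum_(j < k.+1) elem_sym o j * Dsh (k - j).
Proof.
rewrite !elem_sym_cat -!sumrB; apply: eq_bigr => j _.
by rewrite /D /Dsh; ring.
Qed.

Let second_sum k s : (s <= k.+1)%N -> (k - s < r)%N ->
  \sum_(j < k.+1) elem_sym o j * Dsh (k - j) = \sum_(j < s) elem_sym o j * Dsh (k - j).
Proof.
move=> hs hks.
apply: (sum_ord_upto (F := fun j => elem_sym o j * Dsh (k - j))) => // j hj.
by rewrite Dsh_low ?mulr0 // (leq_ltn_trans _ hks) // leq_sub2l.
Qed.

Lemma parity_step_low k : (k <= r)%N ->
  elem_sym (e ++ shift w o) k = elem_sym (o ++ shift w e) k.
Proof.
move=> hk; apply/eqP; rewrite -subr_eq0 cat_discrepancy (second_sum (s := 1)) //;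
  last by lia.
rewrite big_ord1 elem_sym0 mul1r subn0.
rewrite (sum_ord_from (r := r) (F := fun j => D j * elem_sym (shift w o) (k - j)));
  last first.
  by move=> j hj; rewrite D_low ?mul0r.
move: hk; rewrite leq_eqVlt => /orP[/eqP -> | hk].
  by rewrite big_nat1 subnn elem_sym0 mulr1 Dsh_top subrr.
by rewrite big_geq // Dsh_low // subrr.
Qed.

Lemma parity_step_next :
  elem_sym (e ++ shift w o) r.+1 - elem_sym (o ++ shift w e) r.+1 = r%:R * w * D r.
Proof.
rewrite cat_discrepancy (second_sum (s := 2)) //; last by lia.
rewrite (sum_ord_from (r := r) (F := fun j => D j * elem_sym (shift w o) (r.+1 - j)));
  last by move=> j hj; rewrite D_low ?mul0r.
rewrite big_nat_recr // big_nat1 !big_ord_recl big_ord0 /= /bump /= add1n.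
rewrite subnn subSnn subSS !subn0 !elem_sym0 elem_sym_shift1 -eq_size.
rewrite Dsh_next Dsh_top natrB //; ring.
Qed.

End ParityStep.

Section ParitySums.
Variable A : comNzRingType.
Implicit Types ws : seq A.

(* parity_sums ws = (E, O), where E (resp. O) lists the sums of the entries of
   ws over all subsets of positions of even (resp. odd) cardinality. *)
Fixpoint parity_sums ws : seq A * seq A :=
  if ws is w :: ws' then
    ((parity_sums ws').1 ++ shift w (parity_sums ws').2,
     (parity_sums ws').2 ++ shift w (parity_sums ws').1)
  else ([:: 0], [::]).

Lemma parity_sums_cons w ws :
  parity_sums (w :: ws) =
  ((parity_sums ws).1 ++ shift w (parity_sums ws).2,
   (parity_sums ws).2 ++ shift w (parity_sums ws).1).
Proof. by []. Qed.

Lemma parity_sums_size ws : ws != [::] ->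
  size (parity_sums ws).1 = size (parity_sums ws).2 /\
  (size ws <= size (parity_sums ws).1)%N.
Proof.
elim: ws => [|w [|w' ws] IH] // _; move: (IH isT).
have ws'_gt0 : (0 < size (w' :: ws))%N by [].
set ws' := w' :: ws in ws'_gt0 *; clearbody ws' => -[eq_sz le_sz].
rewrite parity_sums_cons /= !size_cat !size_map eq_sz; split=> //.
rewrite eq_sz in le_sz; apply: (leq_ltn_trans le_sz).
by rewrite -addn1 leq_add2l (leq_trans ws'_gt0 le_sz).
Qed.

Lemma parity_sums_elem_sym ws : ws != [::] ->
  (forall k, (k < size ws)%N ->
     elem_sym (parity_sums ws).1 k = elem_sym (parity_sums ws).2 k) /\
  elem_sym (parity_sums ws).1 (size ws) - elem_sym (parity_sums ws).2 (size ws)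
    = - ((size ws).-1)`!%:R * \prod_(w <- ws) w.
Proof.
elim: ws => [|w [|w' ws] IH] // _.
  split=> [[|k] // _|]; first by rewrite !elem_sym0.
  by rewrite /= !elem_sym_consS !elem_sym_nil big_seq1; ring.
move: (IH isT) (@parity_sums_size (w' :: ws) isT).
have ws'_gt0 : (0 < size (w' :: ws))%N by [].
set ws' := w' :: ws in ws'_gt0 *; clearbody ws' => -[eq_low eq_top] [eq_sz le_sz].
rewrite parity_sums_cons /=; split.
  by move=> k; rewrite ltnS; apply: parity_step_low.
rewrite parity_step_next // eq_top big_cons -(prednK ws'_gt0) factS natrM /=; ring.
Qed.

End ParitySums.

Section GammaFiltration.
Variables (R : comNzRingType) (H : comAlgType R) (K0 : comNzRingType) (LB : Type).
Variables (cls : LB -> K0) (c : nat -> K0 -> H).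
Local Notation gamma := (in_gamma cls c).

Lemma gamma0 d : gamma d 0.
Proof. by exists [::]; rewrite big_nil. Qed.

Lemma gammaD d x y : gamma d x -> gamma d y -> gamma d (x + y).
Proof.
move=> [s1 [h1 ->]] [s2 [h2 ->]]; exists (s1 ++ s2).
by rewrite all_cat h1 h2 big_cat.
Qed.

Lemma gammaZ d k x : gamma d x -> gamma d (k *: x).
Proof.
move=> [s [hs ->]]; exists [seq (k * p.1, p.2) | p <- s]; split.
  by rewrite all_map.
by rewrite big_map scaler_sumr; apply: eq_bigr => p _; rewrite scalerA.
Qed.

Lemma gammaN d x : gamma d x -> gamma d (- x).
Proof. by move=> /(gammaZ (-1)); rewrite scaleN1r. Qed.

Lemma gammaB d x y : gamma d x -> gamma d y -> gamma d (x - y).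
Proof. by move=> hx /gammaN; apply: gammaD. Qed.

Lemma gamma_natr d n x : gamma d x -> gamma d (n%:R * x).
Proof. by move=> /(gammaZ n%:R); rewrite -mulr_algl scaler_nat mulr_natl. Qed.

Lemma gamma_sum d (I : Type) (s : seq I) (P : pred I) (F : I -> H) :
  (forall i, P i -> gamma d (F i)) -> gamma d (\sum_(i <- s | P i) F i).
Proof. by move=> hF; apply: big_ind => //; [exact: gamma0 | exact: gammaD]. Qed.

Lemma gamma_le d d' x : (d' <= d)%N -> gamma d x -> gamma d' x.
Proof.
move=> hd [s [hs ->]]; exists s; split=> //.
by apply: sub_all hs => p /= hp; apply: leq_trans hp.
Qed.

Lemma gammaM d d' x y : gamma d x -> gamma d' y -> gamma (d + d') (x * y).
Proof.
move=> [s1 [h1 ->]] [s2 [h2 ->]].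
exists [seq (p.1 * q.1, p.2 ++ q.2) | p <- s1, q <- s2]; split.
  elim: s1 h1 => [|p s1 IH] //= /andP [hp h1]; rewrite all_cat IH // andbT all_map.
  by apply: sub_all h2 => q /= hq; rewrite size_cat; apply: leq_add.
rewrite big_allpairs_dep /= mulr_suml; apply: eq_bigr => p _.
rewrite mulr_sumr; apply: eq_bigr => q _ /=.
by rewrite big_cat /= -scalerAl -scalerAr scalerA.
Qed.

Lemma gamma1 : gamma 0 1.
Proof. by exists [:: (1, [::])]; split => //; rewrite big_seq1 big_nil scale1r. Qed.

Lemma gamma_c1 L : gamma 1 (c 1%N (cls L)).
Proof.
exists [:: (1, [:: L])]; split => //.
by rewrite big_seq1 big_seq1 scale1r.
Qed.

Lemma gammaX n x : gamma 1 x -> gamma n (x ^+ n).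
Proof.
move=> hx; elim: n => [|n IH]; first by rewrite expr0; exact: gamma1.
by rewrite exprS -add1n; apply: gammaM.
Qed.

Let sum_delta1 n (F : nat -> H) : \sum_(j < n.+2) (j == 1%N :> nat)%:R *: F j = F 1%N.
Proof.
rewrite 2!big_ord_recl big1 => [|j _]; last by rewrite scale0r.
by rewrite /= scale0r scale1r add0r addr0.
Qed.

(* A formal group law is x + y modulo terms of total degree >= 2; hence it
   adds elements of gamma^1 modulo gamma^2. *)
Lemma fgl_eval_add (a : nat -> nat -> R) (N : nat) (p q : H) :
  (forall i, a i 0%N = (i == 1%N)%:R) -> (forall j, a 0%N j = (j == 1%N)%:R) ->
  (1 < N)%N -> gamma 1 p -> gamma 1 q -> gamma 2 (fgl_eval a N p q - p - q).
Proof.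
move=> a_0 a0_ + hp hq; case: N => [|[|n]] // _.
have row0 : \sum_(j < n.+2) a 0%N j *: (p ^+ 0 * q ^+ j) = q.
  under eq_bigr => j _ do rewrite a0_ expr0 mul1r.
  by rewrite sum_delta1 expr1.
pose rest := \sum_(i < n.+1) \sum_(j < n.+1)
               a i.+1 j.+1 *: (p ^+ i.+1 * q ^+ j.+1).
have -> : fgl_eval a n.+2 p q = q + p + rest.
  rewrite /fgl_eval big_ord_recl row0 -addrA; congr (_ + _).
  under eq_bigr => i _ do rewrite big_ord_recl a_0 expr0 mulr1.
  rewrite big_split /= big_ord_recl big1 => [|i _]; last by rewrite scale0r.
  by rewrite /= scale1r expr1 addr0.
have -> : q + p + rest - p - q = rest by ring.
apply: gamma_sum => i _; apply: gamma_sum => j _; apply: gammaZ.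
apply: (gamma_le (d := (i.+1 + j.+1)%N)); first by rewrite addnS addSn.
by apply: gammaM; apply: gammaX.
Qed.

Fixpoint gamma_close (Y V : seq H) : Prop :=
  match Y, V with
  | [::], [::] => True
  | y :: Y', v :: V' =>
      [/\ gamma 1 y, gamma 1 v, gamma 2 (y - v) & gamma_close Y' V']
  | _, _ => False
  end.

Lemma gamma_close_cat Y V Y' V' :
  gamma_close Y V -> gamma_close Y' V' -> gamma_close (Y ++ Y') (V ++ V').
Proof.
by elim: Y V => [|y Y IH] [|v V] //= [hy hv hyv hYV] hYV'; split=> //; apply: IH.
Qed.

Lemma gamma_close_elem_sym Y V : gamma_close Y V -> forall k,
  [/\ gamma k (elem_sym Y k), gamma k (elem_sym V k)
    & gamma k.+1 (elem_sym Y k - elem_sym V k)].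
Proof.
elim: Y V => [|y Y IH] [|v V] //=.
  move=> _ k; rewrite !elem_sym_nil subrr.
  have unit_k : gamma k (k == 0%N)%:R by case: k => [|k]; [exact: gamma1 | exact: gamma0].
  by split=> //; exact: gamma0.
move=> [hy hv hyv hYV] [|k].
  by rewrite !elem_sym0 subrr; split; [exact: gamma1 | exact: gamma1 | exact: gamma0].
have [hY1 hV1 hYV1] := IH V hYV k.+1; have [hY hV hYV0] := IH V hYV k.
rewrite !elem_sym_consS; split; try by apply: gammaD => //; rewrite -add1n; apply: gammaM.
have -> : elem_sym Y k.+1 + y * elem_sym Y k - (elem_sym V k.+1 + v * elem_sym V k) =
   (elem_sym Y k.+1 - elem_sym V k.+1)
   + ((y - v) * elem_sym Y k + v * (elem_sym Y k - elem_sym V k)) by ring.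
apply: gammaD => //; apply: gammaD; first by rewrite -add2n; apply: gammaM.
by rewrite -add1n; apply: gammaM.
Qed.

Lemma gamma_close_elem_symB Ye Ve Yo Vo k :
  gamma_close Ye Ve -> gamma_close Yo Vo ->
  gamma k.+1 ((elem_sym Ye k - elem_sym Yo k) - (elem_sym Ve k - elem_sym Vo k)).
Proof.
move=> /gamma_close_elem_sym/(_ k)[_ _ close_e] /gamma_close_elem_sym/(_ k)[_ _ close_o].
have -> : elem_sym Ye k - elem_sym Yo k - (elem_sym Ve k - elem_sym Vo k) =
  (elem_sym Ye k - elem_sym Ve k) - (elem_sym Yo k - elem_sym Vo k) by ring.
exact: gammaB.
Qed.

Lemma gamma_close_prod Y V : gamma_close Y V ->
  gamma (size Y) (\prod_(y <- Y) y) /\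
  gamma (size Y).+1 (\prod_(y <- Y) y - \prod_(v <- V) v).
Proof.
elim: Y V => [|y Y IH] [|v V] //=.
  by move=> _; rewrite !big_nil subrr; split; [exact: gamma1 | exact: gamma0].
move=> [hy hv hyv hYV]; have [hY hYV'] := IH V hYV.
rewrite !big_cons; split; first by rewrite -add1n; apply: gammaM.
have -> : y * \prod_(y0 <- Y) y0 - v * \prod_(v0 <- V) v0 =
  (y - v) * \prod_(y0 <- Y) y0 + v * (\prod_(y0 <- Y) y0 - \prod_(v0 <- V) v0) by ring.
by apply: gammaD; [rewrite -add2n | rewrite -add1n]; apply: gammaM.
Qed.

Section SeriesQuotient.
Variables (ce eo ee : nat -> H).
Hypotheses (ce0 : ce 0%N = 1) (eo0 : eo 0%N = 1) (eo_gamma : forall k, gamma k (eo k)).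
Hypothesis ee_conv : forall k, ee k = \sum_(i < k.+1) ce i * eo (k - i)%N.

Lemma quotient_coef k : (forall i, (0 < i < k.+1)%N -> gamma i.+1 (ce i)) ->
  gamma k.+2 (ce k.+1 - (ee k.+1 - eo k.+1)).
Proof.
move=> ce_low; rewrite ee_conv big_ord_recl ce0 mul1r subn0 big_ord_recr /= subnn eo0.
have -> : forall s x y : H, x - (y + (s + x * 1) - y) = - s by move=> *; ring.
apply/gammaN/gamma_sum => i _; rewrite /bump /= add1n subSS.
have -> : k.+2 = (i.+2 + (k - i))%N by have := ltn_ord i; lia.
by apply: gammaM; [apply: ce_low; rewrite /= ltnS ltn_ord | apply: eo_gamma].
Qed.

Variable r : nat.
Hypothesis low_diff : forall k, (0 < k < r)%N -> gamma k.+1 (ee k - eo k).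

Lemma quotient_low k : (0 < k < r)%N -> gamma k.+1 (ce k).
Proof.
elim/ltn_ind: k => -[|k] // IH hk.
have -> : ce k.+1 = (ce k.+1 - (ee k.+1 - eo k.+1)) + (ee k.+1 - eo k.+1) by ring.
apply: gammaD; last exact: low_diff.
by apply: quotient_coef => i /andP[i_gt0 hi]; apply: IH => //; lia.
Qed.

Lemma quotient_top : (0 < r)%N -> gamma r.+1 (ce r - (ee r - eo r)).
Proof. by case: r low_diff quotient_low => // n _ ce_low _; apply: quotient_coef. Qed.

End SeriesQuotient.

End GammaFiltration.

Section OrientedTheory.
Variables (R : comNzRingType) (H : comAlgType R) (K0 : comNzRingType) (LB : Type).
Variables (tens : LB -> LB -> LB) (dual : LB -> LB) (triv : LB).
Variables (cls : LB -> K0) (c : nat -> K0 -> H) (a : nat -> nat -> R) (N : nat).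
Hypothesis hoct : oct_axioms tens dual triv cls c a N.
Local Notation gamma := (in_gamma cls c).
Local Notation c1 L := (c 1%N (cls L)).

Lemma chern_zero k : c k 0 = (k == 0%N)%:R.
Proof.
case: k => [|k]; first by rewrite (c0 hoct).
by move: (c_trivial hoct 0 (ltn0Sn k)); rewrite mulr0n.
Qed.

Lemma chern_sum_lines (l : seq LB) k :
  c k (\sum_(L <- l) cls L) = elem_sym [seq c1 L | L <- l] k.
Proof.
elim: l k => [|L l IH] k; first by rewrite big_nil chern_zero elem_sym_nil.
case: k => [|k]; first by rewrite (c0 hoct) elem_sym0.
rewrite big_cons (c_add hoct) /= elem_sym_consS -!IH.
rewrite 2!big_ord_recl [X in _ + (_ + X)]big1 => [|i _]; last first.
  by rewrite (c_line_rank hoct) ?mul0r.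
by rewrite /= (c0 hoct) mul1r addr0 subn0 subSS subn0.
Qed.

Lemma chern_sum_lines_diff (ls os : seq LB) k :
  elem_sym [seq c1 L | L <- ls] k =
  \sum_(i < k.+1) c i (\sum_(L <- ls) cls L - \sum_(L <- os) cls L)
                  * elem_sym [seq c1 L | L <- os] (k - i)%N.
Proof.
have := c_add hoct k (\sum_(L <- ls) cls L - \sum_(L <- os) cls L) (\sum_(L <- os) cls L).
rewrite subrK chern_sum_lines => ->.
by apply: eq_bigr => i _; rewrite chern_sum_lines.
Qed.

Lemma c1_triv : c1 triv = 0.
Proof. by rewrite (cls_triv hoct) -[X in c _ X]mulr1n (c_trivial hoct). Qed.

Lemma c1_tens L M : gamma 2 (c1 (tens L M) - c1 L - c1 M).
Proof.
have [le_N1 | lt1N] := leqP N 1.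
  have c1_0 P : c1 P = 0.
    have := c1_nilp hoct P; case: N le_N1 => [|[|]] // _.
    by rewrite expr0 => one0; rewrite -[LHS]mulr1 one0 mulr0.
  by rewrite !c1_0 !subr0; apply: gamma0.
have [a_0 a0_ _ _] := fgl_ok hoct.
by rewrite (c1_tens hoct); apply: fgl_eval_add => //; apply: gamma_c1.
Qed.

Lemma c1_dual L : gamma 2 (c1 (dual L) + c1 L).
Proof.
have := gammaN (c1_tens L (dual L)); rewrite (tensV hoct) c1_triv.
by congr (gamma 2 _); ring.
Qed.

(* parity_tensors ms = (E, O): E (resp. O) lists the tensor products of the
   line bundles of ms over the subsets of even (resp. odd) cardinality. *)
Fixpoint parity_tensors (ms : seq LB) : seq LB * seq LB :=
  if ms is m :: ms' then
    ((parity_tensors ms').1 ++ map (tens m) (parity_tensors ms').2,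
     (parity_tensors ms').2 ++ map (tens m) (parity_tensors ms').1)
  else ([:: triv], [::]).

Lemma parity_tensors_cls ms :
  \prod_(m <- ms) (1 - cls m) =
  \sum_(L <- (parity_tensors ms).1) cls L - \sum_(L <- (parity_tensors ms).2) cls L.
Proof.
elim: ms => [|m ms IH].
  by rewrite /= big_nil big_seq1 big_nil (cls_triv hoct) subr0.
have tens_sum l : \sum_(L <- map (tens m) l) cls L = cls m * \sum_(L <- l) cls L.
  by rewrite big_map mulr_sumr; apply: eq_bigr => L _; rewrite (cls_tens hoct).
by rewrite big_cons IH /= !big_cat /= !tens_sum; ring.
Qed.

Lemma gamma_close_tens m l V :
  gamma_close cls c [seq c1 L | L <- l] V ->
  gamma_close cls c [seq c1 L | L <- map (tens m) l] (shift (c1 m) V).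
Proof.
elim: l V => [|L l IH] [|v V] //= [hL hv hLv hlV]; split; last exact: IH.
- exact: gamma_c1.
- by apply: gammaD => //; apply: gamma_c1.
have -> : c1 (tens m L) - (c1 m + v) = (c1 (tens m L) - c1 m - c1 L) + (c1 L - v) by ring.
by apply: gammaD => //; apply: c1_tens.
Qed.

Lemma parity_tensors_close ms :
  gamma_close cls c [seq c1 L | L <- (parity_tensors ms).1]
                    (parity_sums [seq c1 m | m <- ms]).1 /\
  gamma_close cls c [seq c1 L | L <- (parity_tensors ms).2]
                    (parity_sums [seq c1 m | m <- ms]).2.
Proof.
elim: ms => [|m ms [IH1 IH2]].
  by rewrite /= c1_triv subr0; do !split; apply: gamma0.
by rewrite /= !map_cat; split; apply: gamma_close_cat => //; apply: gamma_close_tens.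
Qed.

Lemma gamma_close_dual (I : Type) (L : I -> LB) (s : seq I) :
  gamma_close cls c [seq c1 (dual (L i)) | i <- s] [seq - c1 (L i) | i <- s].
Proof.
elim: s => [|i s IH] //=; split=> //; first exact: gamma_c1.
  by apply/gammaN/gamma_c1.
by rewrite opprK; apply: c1_dual.
Qed.

(* Writing prod (1 - [M_l]) = E - O with E, O sums of line bundles, the
   total Chern classes satisfy c(E) = c(E - O) c(O); the first Chern classes
   of E and O are close to the even and odd subset sums of the c_1(M_l), whose
   elementary symmetric functions are computed by parity_sums_elem_sym. *)
Lemma chern_top_prod_one_sub (ms : seq LB) n : size ms = n.+1 ->
  gamma n.+2 (c n.+1 (\prod_(m <- ms) (1 - cls m)) + n`!%:R * \prod_(m <- ms) c1 m).
Proof.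
move=> size_ms; rewrite parity_tensors_cls -(big_map (fun m => c1 m) predT id).
have [close_ev close_od] := parity_tensors_close ms.
set W := [seq c1 m | m <- ms] in close_ev close_od *.
have size_W : size W = n.+1 by rewrite size_map.
have W_ne : W != [::] by rewrite -size_eq0 size_W.
have [sums_low sums_top] := parity_sums_elem_sym W_ne.
rewrite size_W /= in sums_low sums_top.
set Ve := (parity_sums W).1 in close_ev sums_low sums_top.
set Vo := (parity_sums W).2 in close_od sums_low sums_top.
set Ye := [seq c1 L | L <- (parity_tensors ms).1] in close_ev *.
set Yo := [seq c1 L | L <- (parity_tensors ms).2] in close_od *.
have low k : (0 < k < n.+1)%N -> gamma k.+1 (elem_sym Ye k - elem_sym Yo k).
  move=> /andP[_ /sums_low eq_k]; have := gamma_close_elem_symB k close_ev close_od.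
  by rewrite eq_k subrr subr0.
have od_gamma k : gamma k (elem_sym Yo k) by have [] := gamma_close_elem_sym close_od k.
set e := \sum_(L <- _) cls L - _.
have top := quotient_top (ce := fun k => c k e) (c0 hoct e) (elem_sym0 Yo) od_gamma
  (chern_sum_lines_diff _ _) low isT.
have -> : n`!%:R * \prod_(w <- W) w =
  - (elem_sym Ve n.+1 - elem_sym Vo n.+1) by rewrite sums_top; ring.
move: top (gamma_close_elem_symB n.+1 close_ev close_od).
set x := c n.+1 _; set ye := elem_sym Ye n.+1; set yo := elem_sym Yo n.+1.
have -> : x + - (elem_sym Ve n.+1 - elem_sym Vo n.+1) =
  (x - (ye - yo)) + ((ye - yo) - (elem_sym Ve n.+1 - elem_sym Vo n.+1)) by ring.
exact: gammaD.
Qed.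

End OrientedTheory.

Unset Implicit Arguments.

Theorem lemma6p2 (R : comNzRingType) (H : comAlgType R) (K0 : comNzRingType)
    (LB : Type) (tens : LB -> LB -> LB) (dual : LB -> LB) (triv : LB)
    (cls : LB -> K0) (c : nat -> K0 -> H) (a : nat -> nat -> R) (N : nat)
    (hoct : oct_axioms tens dual triv cls c a N)
    (r : nat) (hr : (0 < r)%N) (L : 'I_r -> LB) :
  in_gamma cls c r.+1
    (c r (\prod_(l < r) (1 - cls (dual (L l))))
     - (-1) ^+ r.-1 * (r.-1)`!%:R * \prod_(l < r) c 1%N (cls (L l))).
Proof.
case: r hr L => // n _ L /=.
have prod_enum (T : Type) (V : comNzRingType) (f : 'I_n.+1 -> T) (F : T -> V) :
    \prod_(x <- [seq f l | l <- enum 'I_n.+1]) F x = \prod_(l < n.+1) F (f l).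
  by rewrite big_map big_enum.
set M := [seq dual (L l) | l <- enum 'I_n.+1].
have size_M : size M = n.+1 by rewrite size_map size_enum_ord.
have top := chern_top_prod_one_sub hoct size_M.
have [_ duals] := gamma_close_prod (gamma_close_dual hoct L (enum 'I_n.+1)).
rewrite size_map size_enum_ord !(prod_enum _ _ _ id) prodrN card_ord in duals.
rewrite /M !prod_enum in top.
set P := \prod_(l < n.+1) c 1%N (cls (dual (L l))) in top duals.
set Q := \prod_(l < n.+1) c 1%N (cls (L l)) in duals *.
set C := c n.+1 _ in top *.
have -> : C - (-1) ^+ n * n`!%:R * Q = (C + n`!%:R * P) - n`!%:R * (P - (-1) ^+ n.+1 * Q).
  by rewrite exprS; ring.
exact/gammaB/gamma_natr.
Qed.
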